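(* Let $A\in\mathbb R^{n_x\times n_x}$, $B\in\mathbb R^{n_x\times n_u}$, $E\in\mathbb R^{n_x\times n_w}$, $C\in\mathbb R^{n_y\times n_x}$ define the stochastic system $X_{k+1}=AX_k+BU_k+EW_k$, $Y_k=CX_k$, with i.i.d. process disturbances $W_k\in\mathcal L^2$ of known distribution. Assume that $(A,B)$ is controllable and $(A,C)$ is observable, and let $T_{\mathrm{ini}}$ be an integer not smaller than the lag of $(A,C)$. Assume this state-space model is equivalent to the VARX model $$Y_k=\hat A\,Y_{[k-T_{\mathrm{ini}},k-1]}+\hat B\,U_{[k-T_{\mathrm{ini}},k-1]}+W_{k-1},$$ with $\hat A\in\mathbb R^{n_y\times T_{\mathrm{ini}}n_y}$, $\hat B\in\mathbb R^{n_y\times T_{\mathrm{ini}}n_u}$ and $W_k\in\mathcal L^2(\mathbb R^{n_y})$. Let $(u^{\mathrm{ud}},y^{\mathrm{ud}})_{[1-T_{\mathrm{ini}},T]}$ be recorded real input-output data of the undisturbed system, i.e. $y^{\mathrm{ud}}_k=\hat A\,y^{\mathrm{ud}}_{[k-T_{\mathrm{ini}},k-1]}+\hat B\,u^{\mathrm{ud}}_{[k-T_{\mathrm{ini}},k-1]}$ for all $k\in\mathbb I_{[1,T]}$, and let $N\in\mathbb N^+$ be such that $$\operatorname{rank}\begin{bmatrix}\mathcal H_{T_{\mathrm{ini}}+N}(u^{\mathrm{ud}}_{[1,T]})\\ \mathcal H_{T_{\mathrm{ini}}}(y^{\mathrm{ud}}_{[1,T-N]})\end{bmatrix}=(T_{\mathrm{ini}}+N)n_u+T_{\mathrm{ini}}n_y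 .$$ Then a real sequence $(u,y)_{[1-T_{\mathrm{ini}},N]}$ satisfies the undisturbed dynamics $y_k=\hat A\,y_{[k-T_{\mathrm{ini}},k-1]}+\hat B\,u_{[k-T_{\mathrm{ini}},k-1]}$ for all $k\in\mathbb I_{[1,N]}$ if and only if there exists $g\in\mathbb R^{T-N-T_{\mathrm{ini}}+1}$ such that $$\begin{bmatrix}\mathcal H_{T_{\mathrm{ini}}+N}(u^{\mathrm{ud}}_{[1,T]})\\ \mathcal H_{T_{\mathrm{ini}}+N}(y^{\mathrm{ud}}_{[1,T]})\end{bmatrix}g=\begin{bmatrix}u_{[1-T_{\mathrm{ini}},N]}\\ y_{[1-T_{\mathrm{ini}},N]}\end{bmatrix}.$$
   Context: $\mathcal L^2(\mathbb R^n)$ denotes $\mathbb R^n$-valued random variables with finite second moments on a probability space. $\mathbb I_{[a,b]}=\{a,a+1,\dots,b\}$; for a sequence $z$, $z_{[a,b]}=[z_a^\top,\dots,z_b^\top]^\top$. For a sequence $z_{[a,b]}$ with $z_k\in\mathbb R^n$ and $M\le b-a+1$, the Hankel matrix $\mathcal H_M(z_{[a,b]})$ is the $Mn\times(b-a-M+2)$ block matrix whose $(r,c)$ block is $z_{a+r+c-2}$. The lag of an observable pair $(A,C)$ is the smallest $\ell$ such that $[C^\top,(CA)^\top,\dots,(CA^{\ell-1})^\top]^\top$ has full column rank. *)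

From HB Require Import structures.
From mathcomp Require Import all_boot all_order all_algebra.
From mathcomp Require Import reals.
Set Implicit Arguments. Unset Strict Implicit. Unset Printing Implicit Defensive.
Import Order.TTheory GRing.Theory Num.Theory.
Local Open Scope ring_scope.

Section Defs.
Variable R : realType.

Fixpoint obsmx (nx ny : nat) (A : 'M[R]_nx) (C : 'M[R]_(ny, nx)) (l : nat)
  : 'M[R]_(l * ny, nx) :=
  match l return 'M[R]_(l * ny, nx) with
  | 0 => 0
  | l'.+1 => col_mx C (obsmx A C l' *m A)
  end.

Fixpoint ctrbmx (nx nu : nat) (A : 'M[R]_nx) (B : 'M[R]_(nx, nu)) (l : nat)
  : 'M[R]_(nx, l * nu) :=
  match l return 'M[R]_(nx, l * nu) with
  | 0 => 0
  | l'.+1 => row_mx B (A *m ctrbmx A B l')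
  end.

Definition controllable nx nu (A : 'M[R]_nx) (B : 'M[R]_(nx, nu)) : Prop :=
  \rank (ctrbmx A B nx) = nx.

Definition observable nx ny (A : 'M[R]_nx) (C : 'M[R]_(ny, nx)) : Prop :=
  \rank (obsmx A C nx) = nx.

Definition is_lag nx ny (A : 'M[R]_nx) (C : 'M[R]_(ny, nx)) (l : nat) : Prop :=
  \rank (obsmx A C l) = nx /\ (forall l', (l' < l)%N -> \rank (obsmx A C l') <> nx).

(* z_[a, a+L-1] stacked as a column vector of size L*n (block r is z_(a+r)). *)
Definition seg n (z : int -> 'cV[R]_n) (a : int) (L : nat) : 'cV[R]_(L * n) :=
  (mxvec (\matrix_(r < L, c < n) z (a + (r : nat)%:Z) c ord0))^T.

(* Hankel matrix with M block rows and K columns built from z starting at a: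
   block (r, c) (0-based) is z_(a+r+c); i.e. H_M(z_[a, a+M+K-2]). *)
Definition hankel n (z : int -> 'cV[R]_n) (a : int) (M K : nat)
  : 'M[R]_(M * n, K) :=
  \matrix_(i < M * n, c < K) seg z (a + (c : nat)%:Z) M i ord0.

Definition varx nu ny (Tini : nat) (Ah : 'M[R]_(ny, Tini * ny))
  (Bh : 'M[R]_(ny, Tini * nu)) (u : int -> 'cV[R]_nu) (y : int -> 'cV[R]_ny)
  (k : int) : Prop :=
  y k = Ah *m seg y (k - Tini%:Z) Tini + Bh *m seg u (k - Tini%:Z) Tini.

End Defs.

(** A column [g] of weights turns the data Hankel matrices into the windows
    of the trajectory [t |-> sum_c g_c (u^ud, y^ud)_(t + Tini + c)], which again
    obeys the (linear, time-invariant) VARX recursion on [1, N].  Conversely, a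
    VARX trajectory on [1, N] is determined by its inputs and its first [Tini]
    outputs, and the rank condition says exactly that every such inputs/initial
    outputs pair is reached by some [g]. *)
From HB Require Import structures.
From mathcomp Require Import all_boot all_order all_algebra.
From mathcomp Require Import reals zify ring.
Import Order.TTheory GRing.Theory Num.Theory.
Local Open Scope ring_scope.

Set Implicit Arguments. Unset Strict Implicit. Unset Printing Implicit Defensive.

Section Segments.
Variables (R : realType) (n : nat).
Implicit Types (z : int -> 'cV[R]_n) (a s : int) (L K : nat).

Lemma segE z a L (r : 'I_L) (j : 'I_n) :
  seg z a L (mxvec_index r j) 0 = z (a + (r : nat)%:Z) j 0.
Proof. by rewrite /seg mxE mxvecE mxE. Qed.

Lemma eq_seg z z' a L :
  seg z a L = seg z' a L <-> (forall t, a <= t < a + L%:Z -> z t = z' t).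
Proof.
split=> [eq_zz' t /andP[lo hi] | eq_zz'].
  have r_lt : (`|t - a|%N < L)%N by lia.
  have -> : t = a + (`|t - a|%N)%:Z by lia.
  apply/matrixP => j k; rewrite (ord1 k).
  by rewrite -(segE z _ (Ordinal r_lt)) eq_zz' segE.
apply/matrixP => i k; rewrite (ord1 k).
case/mxvec_indexP: i => r j; rewrite !segE eq_zz' //.
by have := ltn_ord r; lia.
Qed.

Definition hankel_comb K (g : 'cV[R]_K) z s : int -> 'cV[R]_n :=
  fun t => \sum_(c < K) g c 0 *: z (t + s + (c : nat)%:Z).

Lemma seg_hankel_comb K (g : 'cV[R]_K) z s a L :
  seg (hankel_comb g z s) a L = \sum_(c < K) g c 0 *: seg z (a + s + (c : nat)%:Z) L.
Proof.
apply/matrixP => i k; rewrite (ord1 k).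
case/mxvec_indexP: i => r j; rewrite segE /hankel_comb !summxE.
apply: eq_bigr => c _; rewrite !mxE mxvecE mxE.
by congr (_ * z _ _ _); ring.
Qed.

Lemma hankel_mulmx z a L K (g : 'cV[R]_K) s :
  hankel z a L K *m g = seg (hankel_comb g z s) (a - s) L.
Proof.
rewrite seg_hankel_comb; apply/matrixP => i k; rewrite (ord1 k) !mxE summxE.
by apply: eq_bigr => c _; rewrite !mxE mulrC subrK.
Qed.

End Segments.

Section VARX.
Variables (R : realType) (nu ny Tini : nat).
Variables (Ah : 'M[R]_(ny, Tini * ny)) (Bh : 'M[R]_(ny, Tini * nu)).

Lemma varx_hankel_comb K (g : 'cV[R]_K) u y s k :
  (forall c : 'I_K, varx Ah Bh u y (k + s + (c : nat)%:Z)) ->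
  varx Ah Bh (hankel_comb g u s) (hankel_comb g y s) k.
Proof.
move=> varx_uy; rewrite /varx !seg_hankel_comb {1}/hankel_comb.
rewrite !mulmx_sumr -big_split; apply: eq_bigr => c _.
rewrite varx_uy -!scalemxAr /= -scalerDr.
by congr (_ *: (Ah *m seg y _ _ + Bh *m seg u _ _)); ring.
Qed.

Lemma varx_unique (u u' : int -> 'cV[R]_nu) (y y' : int -> 'cV[R]_ny) a (N : nat) :
  (forall t, a - Tini%:Z <= t < a + N%:Z -> u t = u' t) ->
  (forall t, a - Tini%:Z <= t < a -> y t = y' t) ->
  (forall k, a <= k < a + N%:Z -> varx Ah Bh u y k) ->
  (forall k, a <= k < a + N%:Z -> varx Ah Bh u' y' k) ->
  forall t, a - Tini%:Z <= t < a + N%:Z -> y t = y' t.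
Proof.
move=> eq_u eq_ini varx_uy varx_uy'.
elim: N eq_u varx_uy varx_uy' => [|N IHN] eq_u varx_uy varx_uy' t t_in.
  by apply: eq_ini; lia.
have eq_y : forall t, a - Tini%:Z <= t < a + N%:Z -> y t = y' t.
  by apply: IHN => [t' ? | k ? | k ?]; [apply: eq_u | apply: varx_uy | apply: varx_uy']; lia.
have [t_lt | t_ge] := boolP (t < a + N%:Z); first by apply: eq_y; lia.
have -> : t = a + N%:Z by lia.
have k_in : a <= a + N%:Z < a + N.+1%:Z by lia.
rewrite (varx_uy _ k_in) (varx_uy' _ k_in).
by congr (Ah *m _ + Bh *m _); apply/eq_seg => t' ?; [apply: eq_y | apply: eq_u]; lia.
Qed.

End VARX.

Theorem lemma2 (R : realType) (nx nu nw ny : nat)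
  (A : 'M[R]_nx) (B : 'M[R]_(nx, nu)) (E : 'M[R]_(nx, nw)) (C : 'M[R]_(ny, nx))
  (Tini : nat)
  (Hctrb : controllable A B) (Hobs : observable A C)
  (Hlag : exists l, is_lag A C l /\ (l <= Tini)%N)
  (Ah : 'M[R]_(ny, Tini * ny)) (Bh : 'M[R]_(ny, Tini * nu))
  (* deterministic (undisturbed) part of the equivalence SS <-> VARX *)
  (Hequiv : forall (x : int -> 'cV[R]_nx) (u : int -> 'cV[R]_nu),
      (forall k, x (k + 1) = A *m x k + B *m u k) ->
      forall k, varx Ah Bh u (fun j => C *m x j) k)
  (T N : nat) (uud : int -> 'cV[R]_nu) (yud : int -> 'cV[R]_ny)
  (HTN : (Tini + N <= T)%N)
  (Hdata : forall k : int, 1 <= k <= T%:Z -> varx Ah Bh uud yud k)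
  (HN : (0 < N)%N)
  (Hrank : \rank (col_mx (hankel uud 1 (Tini + N) (T - N - Tini + 1))
                         (hankel yud 1 Tini (T - N - Tini + 1)))
           = ((Tini + N) * nu + Tini * ny)%N)
  (u : int -> 'cV[R]_nu) (y : int -> 'cV[R]_ny) :
  (forall k : int, 1 <= k <= N%:Z -> varx Ah Bh u y k) <->
  (exists g : 'cV[R]_(T - N - Tini + 1),
      col_mx (hankel uud 1 (Tini + N) (T - N - Tini + 1))
             (hankel yud 1 (Tini + N) (T - N - Tini + 1)) *m g
      = col_mx (seg u (1 - Tini%:Z) (Tini + N)) (seg y (1 - Tini%:Z) (Tini + N))).
Proof.
set K := (T - N - Tini + 1)%N.
have varx_comb (g : 'cV[R]_K) k : 1 <= k <= N%:Z ->
    varx Ah Bh (hankel_comb g uud Tini%:Z) (hankel_comb g yud Tini%:Z) k.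
  by move=> k_in; apply: varx_hankel_comb => c; apply: Hdata; have := ltn_ord c; lia.
split => [varx_uy | [g]].
- pose M := col_mx (hankel uud 1 (Tini + N) K) (hankel yud 1 Tini K).
  have /row_freeP[M' MM'] : row_free M by rewrite /row_free Hrank.
  pose v := col_mx (seg u (1 - Tini%:Z) (Tini + N)) (seg y (1 - Tini%:Z) Tini).
  have : M *m (M' *m v) = v by rewrite mulmxA MM' mul1mx.
  rewrite mul_col_mx !(hankel_mulmx _ _ _ _ Tini%:Z).
  move=> /eq_col_mx[/eq_seg eq_u /eq_seg eq_ini].
  exists (M' *m v); rewrite mul_col_mx !(hankel_mulmx _ _ _ _ Tini%:Z).
  congr col_mx; first by apply/eq_seg.
  apply/eq_seg => t t_in.
  apply: (varx_unique (Ah := Ah) (Bh := Bh) (u := hankel_comb _ uud Tini%:Z) (u' := u)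
            (a := 1) (N := N)).
  + by move=> t' ?; apply: eq_u; lia.
  + by move=> t' ?; apply: eq_ini; lia.
  + by move=> k ?; apply: varx_comb; lia.
  + by move=> k ?; apply: varx_uy; lia.
  + by lia.
- rewrite mul_col_mx !(hankel_mulmx _ _ _ _ Tini%:Z).
  move=> /eq_col_mx[/eq_seg eq_u /eq_seg eq_y] k k_in.
  rewrite /varx -eq_y; last by lia.
  rewrite varx_comb //; congr (Ah *m _ + Bh *m _); apply/eq_seg => t t_in.
    by rewrite eq_y //; lia.
  by rewrite eq_u //; lia.
Qed.
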